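(* Let $n\ge2$, let $k$ be an integer with $1\le k\le n$, and let $M$ be any mechanism that is DIC for capacity $k$. Define $\alpha=\frac{2k}{k+1}$ if $k\le\lceil (n-1)/2\rceil$, and $\alpha=\max\{\frac{n-1}{k+1},1\}$ otherwise. Then $M$ is at best an $\alpha$-approximation: for every $\alpha'<\alpha$ there exists a profile $\boldsymbol{x}\in[0,1]^n$ with $\Pi^*(\boldsymbol{x},k)>\alpha'\,\Pi_M(\boldsymbol{x},k)$.
   Context: There are $n$ agents $N=\{1,\dots,n\}$ with locations $x_i\in[0,1]$, profile $\boldsymbol{x}$. A mechanism is a deterministic function $M:[0,1]^n\to[0,1]$ giving the facility location from reported locations. The facility has capacity $k$. Given $\boldsymbol{x}$ and $s$, agent $i$ has higher priority than $j$ if $|s-x_i|<|s-x_j|$, ties broken by a fixed deterministic rule; $N_k^*(\boldsymbol{x},s)$ is the set of the $k$ highest-priority agents. Agent $i$'s ex-post equilibrium utility (of the subgame in which agents choose whether to travel to the capacity-$k$ facility, excess travellers rationed by priority) is $u_i^*(s,\boldsymbol{x},k)=1-|s-x_i|$ if $i\in N_k^*(\boldsymbol{x},s)$ and $0$ otherwise, computed at true locations. $M$ is DIC for capacity $k$ if for every $i$, every true profile $\boldsymbol{x}$, every $x_i'\in[0,1]$, and every reports $\hat{\boldsymbol{x}}_{-i}$ of the others, $u_i^*(M(x_i,\hat{\boldsymbol{x}}_{-i}),\boldsymbol{x},k)\ge u_i^*(M(x_i',\hat{\boldsymbol{x}}_{-i}),\boldsymbol{x},k)$. Optimal welfare: $\Pi^*(\boldsymbol{x},k)=\max_{s\in[0,1]}\sum_i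 u_i^*(s,\boldsymbol{x},k)$; mechanism welfare: $\Pi_M(\boldsymbol{x},k)=\sum_i u_i^*(M(\boldsymbol{x}),\boldsymbol{x},k)$. $M$ is an $\alpha$-approximation if $\max_{\boldsymbol{x}}\Pi^*(\boldsymbol{x},k)/\Pi_M(\boldsymbol{x},k)\le\alpha$. *)

From HB Require Import structures.
From mathcomp Require Import all_boot all_order all_algebra.
From mathcomp Require Import all_classical all_reals.
Set Implicit Arguments. Unset Strict Implicit. Unset Printing Implicit Defensive.
Import Order.TTheory GRing.Theory Num.Theory.
Local Open Scope ring_scope.
Local Open Scope classical_set_scope.

Section FL.
Variables (R : realType) (n : nat).

Definition profile := 'I_n -> R.

Definition in_unit (a : R) : bool := (0 <= a) && (a <= 1).
Definition in_cube (x : profile) : Prop := forall i, in_unit (x i).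

Definition higher (rk : 'I_n -> nat) (x : profile) (s : R) (j i : 'I_n) : bool :=
  (`|s - x j| < `|s - x i|) ||
  ((`|s - x j| == `|s - x i|) && (rk j < rk i)%N).

(* N_k^*(x,s): the k highest-priority agents, i.e. those with fewer than k
   agents of strictly higher priority. *)
Definition topk (rk : 'I_n -> nat) (k : nat) (x : profile) (s : R) (i : 'I_n) : bool :=
  (#|[set j | higher rk x s j i]| < k)%N.

Definition util (rk : 'I_n -> nat) (s : R) (x : profile) (k : nat) (i : 'I_n) : R :=
  if topk rk k x s i then 1 - `|s - x i| else 0.

Definition welfare (rk : 'I_n -> nat) (s : R) (x : profile) (k : nat) : R :=
  \sum_(i < n) util rk s x k i.

(* Optimal welfare Pi^*(x,k) = max over s in [0,1] (taken as the supremum). *)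
Definition opt_welfare (rk : 'I_n -> nat) (x : profile) (k : nat) : R :=
  sup [set welfare rk s x k | s in [set s : R | in_unit s]].

Definition mech_welfare (rk : 'I_n -> nat) (M : profile -> R) (x : profile) (k : nat) : R :=
  welfare rk (M x) x k.

Definition mechanism (M : profile -> R) : Prop :=
  forall x, in_cube x -> in_unit (M x).

Definition upd (xh : profile) (i : 'I_n) (a : R) : profile :=
  fun j => if j == i then a else xh j.

Definition DIC (rk : 'I_n -> nat) (M : profile -> R) (k : nat) : Prop :=
  forall (i : 'I_n) (x : profile) (x' : R) (xh : profile),
    in_cube x -> in_unit x' -> in_cube xh ->
    util rk (M (upd xh i (x i))) x k i >= util rk (M (upd xh i x')) x k i.

End FL.

Definition ceil_half (m : nat) : nat := (m.+1)./2.

Definition alpha_bound (R : realType) (n k : nat) : R :=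
  if (k <= ceil_half n.-1)%N then (2 * k%:R) / (k%:R + 1)
  else Num.max ((n.-1)%:R / (k%:R + 1)) 1.

From mathcomp Require Import all_boot all_order all_algebra.
From mathcomp Require Import all_classical all_reals.
From mathcomp Require Import lra zify.
Import Order.TTheory GRing.Theory Num.Theory.
Local Open Scope ring_scope.

(* Suppose all agents but one sit at 0 or 1 and the facility is at distance at
   least 1/2 from each of them.  Then the facility earns at most (k + 1) / 2,
   whereas a facility at the more crowded endpoint serves min(m, k) agents with
   2m + 1 >= n; for 1 <= alpha' < alpha the ratio of these bounds exceeds alpha'.
   Every DIC mechanism M admits such a profile: move the agents from 0 to 1 one
   at a time.  If M's outcome never crosses 1/2, an extreme profile works.
   Otherwise let agent i be the one whose move makes it cross.  DIC forces the
   outcome of a misreport to be at least as far from the true location as from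
   the truthful outcome, so when i reports 1/2 the outcome is exactly 1/2. *)

Lemma card_ord_lt (N m : nat) : (m <= N)%N -> #|[pred o : 'I_N | (o < m)%N]| = m.
Proof. by move=> le_mN; rewrite -sum1_card (big_ord_narrow le_mN) sum1_card card_ord. Qed.

Lemma ex_crossing (P : pred nat) (m : nat) :
  ~~ P 0%N -> P m -> exists2 j, (j < m)%N & ~~ P j && P j.+1.
Proof.
move=> NP0; elim: m => [P0 | m IHm Pm1]; first by rewrite P0 in NP0.
have [Pm | NPm] := boolP (P m); last by exists m; rewrite ?NPm.
by have [j lt_jm crossj] := IHm Pm; exists j => //; apply: ltnW.
Qed.

Section StrictTotalOrderRank.
Context {T : finType} (hi : rel T).
Hypotheses (hi_irr : irreflexive hi) (hi_trans : transitive hi)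
  (hi_total : forall i j, i != j -> hi i j || hi j i).

Definition rank_above (i : T) : nat := #|[pred j | hi j i]|.

Lemma rank_above_lt i j : hi j i -> (rank_above j < rank_above i)%N.
Proof.
move=> hji; apply: proper_card; apply/properP; split.
  by apply/fintype.subsetP => l; rewrite !inE => /hi_trans; apply.
by exists j; rewrite !inE ?hi_irr.
Qed.

Lemma rank_above_inj : injective rank_above.
Proof.
move=> i j eq_ij; apply/eqP; apply: contraTT isT => neq_ij.
by case/orP: (hi_total _ _ neq_ij) => /rank_above_lt; rewrite eq_ij ltnn.
Qed.

Lemma rank_above_lt_card i : (rank_above i < #|T|)%N.
Proof.
apply: proper_card; apply/properP; split; first exact/fintype.subsetP.
by exists i; rewrite ?inE ?hi_irr.
Qed.

Lemma card_rank_above_lt m : #|[pred i | (rank_above i < m)%N]| = minn m #|T|.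
Proof.
pose f i : 'I_#|T| := Ordinal (rank_above_lt_card i).
have f_inj : injective f by move=> i j /(congr1 val) /rank_above_inj.
have f_onto := inj_card_onto f_inj (eq_leq (card_ord _)).
have -> : #|[pred i | (rank_above i < m)%N]|
          = #|[preim f of [pred o : 'I_#|T| | (o < minn m #|T|)%N]]|.
  by apply: eq_card => i; rewrite !inE /= leq_min rank_above_lt_card andbT.
rewrite (card_preim f_inj) -[RHS](@card_ord_lt _ _ (geq_minr m #|T|)).
by apply: eq_card => o; rewrite !inE f_onto.
Qed.

Lemma mem_upclosed_rank_above (A : {pred T}) :
  (forall i j, i \in A -> hi j i -> j \in A) ->
  forall i, (i \in A) = (rank_above i < #|A|)%N.
Proof.
move=> A_up i; apply/idP/idP => [iA | ].
  apply: proper_card; apply/properP; split.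
    by apply/fintype.subsetP => j; rewrite inE; apply: A_up.
  by exists i; rewrite ?inE ?hi_irr.
apply: contraTT => iNA; rewrite -leqNgt.
apply: subset_leq_card; apply/fintype.subsetP => j jA.
have neq_ji : j != i by apply: contraNneq iNA => <-.
rewrite inE; case/orP: (hi_total _ _ neq_ji) => // hij.
by rewrite (A_up _ _ jA hij) in iNA.
Qed.

End StrictTotalOrderRank.

Section Priority.
Context {R : realType} {n : nat} (rk : 'I_n -> nat) (x : profile R n) (s : R).
Hypothesis rk_inj : injective rk.

Lemma higher_irr : irreflexive (higher rk x s).
Proof. by move=> i; rewrite /higher ltxx ltnn andbF. Qed.

Lemma higher_trans : transitive (higher rk x s).
Proof.
move=> j i l; rewrite /higher.
case/orP=> [lt_ij | /andP[/eqP-> lt_rk_ij]] /orP[lt_jl | /andP[/eqP<- lt_rk_jl]].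
- by rewrite (lt_trans lt_ij lt_jl).
- by rewrite lt_ij.
- by rewrite lt_jl.
- by rewrite eqxx (ltn_trans lt_rk_ij lt_rk_jl) orbT.
Qed.

Lemma higher_total i j : i != j -> higher rk x s i j || higher rk x s j i.
Proof.
move=> neq_ij; rewrite /higher.
case: (ltgtP `|s - x i| `|s - x j|) => //= _.
by rewrite -neq_ltn; apply: contra neq_ij => /eqP /rk_inj ->.
Qed.

Lemma topkE k i : topk rk k x s i = (rank_above (higher rk x s) i < k)%N.
Proof. by congr (_ < _)%N; apply: eq_card => j; rewrite unfold_in asboolb. Qed.

Lemma card_topk k : #|[pred i | topk rk k x s i]| = minn k n.
Proof.
rewrite -[n in RHS]card_ord -(card_rank_above_lt _ higher_irr higher_trans higher_total).
by apply: eq_card => i; rewrite !inE topkE.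
Qed.

End Priority.

Lemma sumr_indicator (R : pzSemiRingType) (T : finType) (P : pred T) :
  \sum_i ((P i)%:R : R) = #|P|%:R.
Proof.
rewrite -natr_sum -sum1_card [in RHS]big_mkcond.
by congr _%:R; apply: eq_bigr => i _; rewrite unfold_in; case: (P i).
Qed.

Lemma dist_le1 {R : realType} {a b : R} : in_unit a -> in_unit b -> `|a - b| <= 1.
Proof.
rewrite /in_unit => /andP[a0 a1] /andP[b0 b1].
by rewrite ler_norml; apply/andP; split; lra.
Qed.

Lemma in_unit0 {R : realType} : in_unit (0 : R).
Proof. by rewrite /in_unit lexx ler01. Qed.

Lemma in_unit1 {R : realType} : in_unit (1 : R).
Proof. by rewrite /in_unit lexx ler01. Qed.

Lemma in_unit_half {R : realType} : in_unit (1 / 2 : R).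
Proof. by rewrite /in_unit; apply/andP; split; lra. Qed.

Section Welfare.
Context {R : realType} {n : nat} (rk : 'I_n -> nat) (k : nat) {x : profile R n} {s : R}.

Lemma util_le1 i : util rk s x k i <= 1.
Proof. by rewrite /util; case: ifP => _ //; rewrite lerBlDr lerDl. Qed.

Hypotheses (x_cube : in_cube x) (s_unit : in_unit s).

Lemma util_ge0 i : 0 <= util rk s x k i.
Proof. by rewrite /util; case: ifP => // _; rewrite subr_ge0 dist_le1. Qed.

Lemma welfare_ge0 : 0 <= welfare rk s x k.
Proof. by apply: sumr_ge0 => i _; apply: util_ge0. Qed.

Hypothesis rk_inj : injective rk.

Lemma welfare_le_far i0 d : in_unit d -> (forall i, i != i0 -> d <= `|s - x i|) ->
  welfare rk s x k <= k%:R * (1 - d) + d.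
Proof.
move=> /andP[d_ge0 d_le1] far.
apply: (@le_trans _ _ (\sum_i ((topk rk k x s i)%:R * (1 - d) + (i == i0)%:R * d))).
  apply: ler_sum => i _; have := normr_ge0 (s - x i); rewrite /util.
  by case: ifP; case: eqVneq => [_|/far] /=; lra.
rewrite big_split -!mulr_suml !sumr_indicator card_topk // card1 mul1r lerD2r.
by rewrite ler_wpM2r ?subr_ge0 // ler_nat geq_minl.
Qed.

(* The agents located at s outrank all others, so they hold the top priority ranks. *)
Lemma welfare_ge_count_at : (minn #|[pred i | x i == s]| k)%:R <= welfare rk s x k.
Proof.
set A := [pred i | x i == s].
have A_up i j : i \in A -> higher rk x s j i -> j \in A.
  rewrite !inE /higher => /eqP->; rewrite subrr normr0 ltNge normr_ge0 /=.
  by rewrite normr_eq0 subr_eq0 eq_sym => /andP[].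
have higher_total' := higher_total rk x s rk_inj.
have memA := mem_upclosed_rank_above _ (higher_irr rk x s) higher_total' _ A_up.
apply: (@le_trans _ _ (\sum_i (((i \in A) && topk rk k x s i)%:R))); last first.
  apply: ler_sum => i _; have [/andP[/eqP xi top_i] | _] := boolP (_ && _).
    by rewrite /util top_i xi subrr normr0 subr0.
  exact: util_ge0.
rewrite sumr_indicator ler_nat.
set B := [pred i | (rank_above (higher rk x s) i < minn #|A| k)%N].
rewrite (@eq_card _ _ B) => [|i]; last by rewrite !inE leq_min -memA -topkE.
rewrite (card_rank_above_lt _ (higher_irr rk x s) (higher_trans rk x s) higher_total').
by rewrite (minn_idPl (leq_trans (geq_minl _ _) (max_card _))).
Qed.

End Welfare.

Section Optimum.
Context {R : realType} {n : nat} (rk : 'I_n -> nat) (k : nat) (x : profile R n).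

Lemma welfare_le_opt e : in_unit e -> welfare rk e x k <= opt_welfare rk x k.
Proof.
move=> e_unit; apply: ub_le_sup; last by exists e.
exists n%:R => _ [t _ <-]; rewrite -[n in n%:R]card_ord -sumr_const.
by apply: ler_sum => i _; apply: util_le1.
Qed.

Hypotheses (rk_inj : injective rk) (x_cube : in_cube x).

Lemma opt_welfare_ge_majority i0 :
  (forall i, i != i0 -> (x i == 0) || (x i == 1)) ->
  exists2 m, (n <= m.*2.+1)%N & (minn m k)%:R <= opt_welfare rk x k.
Proof.
move=> binary.
set c0 := #|[pred i | x i == 0]|; set c1 := #|[pred i | x i == 1]|.
have cardU_le (A B : {pred 'I_n}) : (#|[predU A & B]| <= #|A| + #|B|)%N.
  by rewrite -cardUI leq_addr.
have cover : (n <= c0 + c1 + 1)%N.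
  rewrite -[n]card_ord -(card1 i0) -/c0 -/c1.
  apply: (@leq_trans #|[predU [predU [pred i | x i == 0] & [pred i | x i == 1]] & pred1 i0]|).
    apply: subset_leq_card; apply/fintype.subsetP => i _; rewrite !inE.
    by have [-> | /binary ->] := eqVneq i i0; rewrite ?eqxx ?orbT.
  by apply: leq_trans (cardU_le _ _) _; rewrite leq_add2r cardU_le.
have [le_c01 | lt_c10] := leqP c0 c1.
  exists c1; first by lia.
  exact: le_trans (welfare_ge_count_at rk k x_cube in_unit1 rk_inj)
    (welfare_le_opt _ in_unit1).
exists c0; first by lia.
exact: le_trans (welfare_ge_count_at rk k x_cube in_unit0 rk_inj)
  (welfare_le_opt _ in_unit0).
Qed.

End Optimum.

Section Incentives.
Context {R : realType} {n : nat} {rk : 'I_n -> nat} {k : nat} {M : profile R n -> R}.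
Hypotheses (M_mech : mechanism M) (M_DIC : DIC rk M k).
Hypotheses (k_gt0 : (0 < k)%N) (k_lt_n : (k < n)%N).

Lemma upd_cube (xh : profile R n) i a : in_cube xh -> in_unit a -> in_cube (upd xh i a).
Proof. by move=> xh_cube a_unit j; rewrite /upd; case: ifP. Qed.

(* Otherwise an agent at b, facing n - 1 agents sitting at the truthful
   outcome, is rationed out, while reporting a makes it the unique closest agent. *)
Lemma DIC_dist_le i {xh : profile R n} {a b : R} :
  in_cube xh -> in_unit a -> in_unit b ->
  `|M (upd xh i a) - M (upd xh i b)| <= `|M (upd xh i a) - b|.
Proof.
move=> xh_cube a_unit b_unit.
set s := M (upd xh i b); set t := M (upd xh i a).
have s_unit : in_unit s by apply/M_mech/upd_cube.
have t_unit : in_unit t by apply/M_mech/upd_cube.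
rewrite leNgt; apply/negP => closer.
pose x := upd (fun=> s) i b.
have x_cube : in_cube x by apply: upd_cube.
have xi : x i = b by rewrite /x /upd eqxx.
have xj j : j != i -> x j = s by rewrite /x /upd => /negbTE->.
have neq_bs : b != s by apply: contraTneq closer => ->; rewrite ltxx.
have truthful : util rk s x k i = 0.
  rewrite /util topkE ifN // -leqNgt.
  apply: (@leq_trans #|predC1 i|); first by rewrite cardC1 card_ord; lia.
  apply: subset_leq_card; apply/fintype.subsetP => j; rewrite !inE => neq_ji.
  by rewrite /higher xj // xi subrr normr0 normr_gt0 subr_eq0 eq_sym neq_bs.
have misreport : util rk t x k i = 1 - `|t - b|.
  rewrite /util topkE xi ifT // (_ : rank_above _ _ = 0%N) //.
  apply: eq_card0 => j; rewrite !inE /higher.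
  have [-> | neq_ji] := eqVneq j i; first by rewrite ltxx ltnn andbF.
  by rewrite xj // xi ltNge (ltW closer) (gt_eqF closer).
have := M_DIC i x a xh x_cube a_unit xh_cube.
rewrite xi -/s -/t truthful misreport.
by have := dist_le1 t_unit s_unit; lra.
Qed.

Lemma DIC_report_half i xh : in_cube xh ->
  M (upd xh i 0) < 1 / 2 <= M (upd xh i 1) -> M (upd xh i (1 / 2)) = 1 / 2.
Proof.
move=> xh_cube /andP[lo hi].
have := DIC_dist_le i xh_cube in_unit0 in_unit_half.
have := DIC_dist_le i xh_cube in_unit1 in_unit_half.
rewrite (ltr0_norm (x := M (upd xh i 0) - 1 / 2)) ?subr_lt0 //.
rewrite (ger0_norm (x := M (upd xh i 1) - 1 / 2)) ?subr_ge0 //.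
by rewrite !ler_norml => /andP[? ?] /andP[? ?]; lra.
Qed.

Definition step_profile (j : nat) : profile R n := fun i => if (i < j)%N then 1 else 0.

Lemma step_profile_cube j : in_cube (step_profile j).
Proof.
by move=> i; rewrite /step_profile; case: ifP => _; [apply: in_unit1 | apply: in_unit0].
Qed.

Lemma upd_step_profile0 (i : 'I_n) : upd (step_profile i) i 0 = step_profile i.
Proof.
by apply: funext => j; rewrite /upd /step_profile; case: eqVneq => [-> | _]; rewrite ?ltnn.
Qed.

Lemma upd_step_profile1 (i : 'I_n) : upd (step_profile i) i 1 = step_profile i.+1.
Proof.
apply: funext => j; rewrite /upd /step_profile; case: eqVneq => [-> | neq_ji].
  by rewrite ltnSn.
suff -> : (j < i.+1)%N = (j < i)%N by [].
by move: neq_ji; rewrite -val_eqE /=; lia.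
Qed.

Lemma DIC_far_profile : exists x (i0 : 'I_n), [/\ in_cube x,
  forall i, i != i0 -> (x i == 0) || (x i == 1) &
  forall i, i != i0 -> 1 / 2 <= `|M x - x i|].
Proof.
have far0 (t : R) : 1 / 2 <= t -> 1 / 2 <= `|t - 0|.
  by move=> le_half_t; rewrite subr0 ler_normr le_half_t.
have far1 (t : R) : t <= 1 / 2 -> 1 / 2 <= `|t - 1|.
  by move=> le_t_half; rewrite ler_normr; apply/orP; right; lra.
pose i00 : 'I_n := Ordinal (ltn_trans k_gt0 k_lt_n).
have [lt_M0 | le_M0] := ltP (M (step_profile 0)) (1 / 2); last first.
  exists (step_profile 0), i00; split=> [|i _|i _]; first exact: step_profile_cube.
    by rewrite /step_profile ltn0 eqxx.
  by rewrite {2}/step_profile ltn0; apply: far0.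
have [le_Mn | lt_Mn] := leP (1 / 2) (M (step_profile n)); last first.
  exists (step_profile n), i00; split=> [|i _|i _]; first exact: step_profile_cube.
    by rewrite /step_profile ltn_ord eqxx orbT.
  by rewrite {2}/step_profile ltn_ord; apply/far1/ltW.
have [j lt_jn /andP[lt_Mj le_Mj1]] :=
  @ex_crossing (fun j => 1 / 2 <= M (step_profile j)) n (negbT (lt_geF lt_M0)) le_Mn.
pose i0 := Ordinal lt_jn.
have M_half : M (upd (step_profile j) i0 (1 / 2)) = 1 / 2.
  apply: DIC_report_half; first exact: step_profile_cube.
  by rewrite (upd_step_profile0 i0) (upd_step_profile1 i0) ltNge lt_Mj.
exists (upd (step_profile j) i0 (1 / 2)), i0; split=> [|i neq_i0|i neq_i0].
- by apply: upd_cube; [apply: step_profile_cube | apply: in_unit_half].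
- by rewrite /upd (negbTE neq_i0) /step_profile; case: ifP; rewrite eqxx ?orbT.
- rewrite M_half /upd (negbTE neq_i0) /step_profile.
  by case: ifP => _; [apply: far1 | apply: far0].
Qed.

End Incentives.

Lemma lt_alpha_bound_welfare_ratio {R : realType} {n k : nat} {a : R} :
  (2 <= n)%N -> (1 <= k)%N -> 1 <= a -> a < alpha_bound R n k ->
  (k < n)%N /\ forall m, (n <= m.*2.+1)%N -> a * ((k%:R + 1) / 2) < (minn m k)%:R.
Proof.
move=> n_ge2 k_ge1 a_ge1; rewrite /alpha_bound /ceil_half.
have k1_gt0 : (0 : R) < k%:R + 1 by rewrite ltr_wpDl.
case: ifP => [k_small | /negbT k_large].
  rewrite ltr_pdivlMr // => lt_a; split; first by lia.
  by move=> m le_n_2m1; rewrite (minn_idPr _); [lra | lia].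
rewrite lt_max ltr_pdivlMr // => /orP[lt_a | ]; last by lra.
have n1 : (n.-1)%:R = n%:R - 1 :> R.
  by rewrite -[in RHS](prednK (ltnW n_ge2)) -natr1 addrK.
have k2 : n%:R + 1 <= 2 * k%:R :> R.
  have : (n.+1 <= k.*2)%N by lia.
  by rewrite -(ler_nat R) -mul2n natrM -natr1; lra.
rewrite n1 in lt_a; split.
  by rewrite -(ltr_nat R); nra.
move=> m le_n_2m1; have : n%:R <= 2 * m%:R + 1 :> R.
  by move: le_n_2m1; rewrite -(ler_nat R) -natr1 -mul2n natrM; lra.
by case: (leqP m k) => _; nra.
Qed.

Theorem theorem4p3 (R : realType) (n k : nat) (rk : 'I_n -> nat)
  (Hrk : injective rk) (Hn : (2 <= n)%N) (Hk1 : (1 <= k)%N) (Hkn : (k <= n)%N)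
  (M : profile R n -> R) (HM : mechanism M) (HDIC : DIC rk M k) :
  forall alpha' : R, alpha' < alpha_bound R n k ->
  exists x : profile R n, in_cube x /\
    opt_welfare rk x k > alpha' * mech_welfare rk M x k.
Proof.
move=> a lt_a_alpha; have [lt_a1 | ge_a1] := ltP a 1.
  pose x0 : profile R n := fun=> 0.
  have x0_cube : in_cube x0 by move=> i; apply: in_unit0.
  exists x0; split => //.
  have opt_ge1 : 1 <= opt_welfare rk x0 k.
    apply: le_trans (welfare_le_opt rk k x0 _ in_unit0).
    apply: le_trans (welfare_ge_count_at rk k x0_cube in_unit0 Hrk).
    have -> : #|[pred i | x0 i == 0]| = n.
      by rewrite -[RHS]card_ord; apply: eq_card => i; rewrite !inE eqxx.
    by rewrite ler1n leq_min Hk1 (leq_trans _ Hn).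
  have := welfare_le_opt rk k x0 _ (HM _ x0_cube).
  have := welfare_ge0 rk k x0_cube (HM _ x0_cube).
  by rewrite /mech_welfare; case: (lerP a 0); nra.
have [lt_kn ratio] := lt_alpha_bound_welfare_ratio Hn Hk1 ge_a1 lt_a_alpha.
have [x [i0 [x_cube binary far]]] := DIC_far_profile HM HDIC Hk1 lt_kn.
exists x; split => //.
have [m le_n_2m1 opt_ge] := opt_welfare_ge_majority rk k x Hrk x_cube i0 binary.
have := welfare_le_far rk k Hrk i0 _ in_unit_half far.
have := ratio m le_n_2m1.
rewrite /mech_welfare; nra.
Qed.
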